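(* Let $\Sigma$ be an alphabet with $|\Sigma|=2$. For every antimorphic involution $\theta$ on $\Sigma^*$, there is no infinite word over $\Sigma$ that is pseudo-cube-free with respect to $\theta$.
   Context: A function $\theta:\Sigma^*\to\Sigma^*$ is an antimorphic involution if $\theta(uv)=\theta(v)\theta(u)$ and $\theta(\theta(w))=w$. A pseudo cube with respect to $\theta$ is a nonempty word $u_1u_2u_3$ such that for all $1\le i,j\le 3$, $u_i=u_j$ or $u_i=\theta(u_j)$. A word is pseudo-cube-free with respect to $\theta$ if no factor (contiguous subword) of it is a pseudo cube. *)

From mathcomp Require Import all_boot.
Set Implicit Arguments. Unset Strict Implicit. Unset Printing Implicit Defensive.

Definition antimorphic_involution (S : Type) (theta : seq S -> seq S) : Prop :=
  (forall u v : seq S, theta (u ++ v) = theta v ++ theta u) /\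
  (forall w : seq S, theta (theta w) = w).

Definition pseudo_cube (S : eqType) (theta : seq S -> seq S) (x : seq S) : Prop :=
  x <> [::] /\
  exists u1 u2 u3 : seq S,
    x = u1 ++ u2 ++ u3 /\
    forall a b : seq S, a \in [:: u1; u2; u3] -> b \in [:: u1; u2; u3] ->
      a = b \/ a = theta b.

Definition factor (S : Type) (w : nat -> S) (i n : nat) : seq S :=
  mkseq (fun k => w (i + k)) n.

Definition pseudo_cube_free_inf (S : eqType) (theta : seq S -> seq S)
    (w : nat -> S) : Prop :=
  forall i n : nat, ~ pseudo_cube theta (factor w i n).

(* Over two letters, an antimorphic involution is either the reversal or the
   reversal composed with the letter swap.  In the second case any three
   consecutive letters form a pseudo cube.  In the first case a finite check
   shows that every binary word of length 10 contains a factor u1 u2 u3 whose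
   blocks are pairwise equal or mirror images of each other. *)
From mathcomp Require Import all_boot zify.
Set Implicit Arguments. Unset Strict Implicit. Unset Printing Implicit Defensive.

Section AntimorphicInvolution.

Variables (T : Type) (theta : seq T -> seq T).
Hypothesis htheta : antimorphic_involution theta.

Lemma antimorphic_involution_nil : theta [::] = [::].
Proof.
case: htheta => thetaM _; have := congr1 size (thetaM [::] [::]).
by rewrite size_cat; case: (theta [::]) => //= x s; lia.
Qed.

Lemma leq_size_antimorphic_involution s : size s <= size (theta s).
Proof.
case: (htheta) => thetaM thetaK.
elim: s => [|x s IHs] //=.
rewrite -cat1s thetaM size_cat -addn1 leq_add //.
case Ex: (theta [:: x]) => //.
by have := thetaK [:: x]; rewrite Ex antimorphic_involution_nil.
Qed.

Lemma size_antimorphic_involution s : size (theta s) = size s.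
Proof.
apply/eqP; rewrite eqn_leq leq_size_antimorphic_involution andbT.
by case: htheta => _ thetaK; rewrite -{2}(thetaK s) leq_size_antimorphic_involution.
Qed.

Lemma antimorphic_involutionE :
  exists2 f : T -> T, involutive f & forall s, theta s = rev (map f s).
Proof.
case: (htheta) => thetaM thetaK.
pose f x := head x (theta [:: x]).
have thetaf x : theta [:: x] = [:: f x].
  have := size_antimorphic_involution [:: x].
  by rewrite /f; case: (theta [:: x]) => // y [].
exists f => [x | ]; first by have := thetaK [:: x]; rewrite !thetaf => -[].
elim=> [|x s IHs]; first exact: antimorphic_involution_nil.
by rewrite -cat1s thetaM IHs thetaf /= rev_cons cats1.
Qed.

End AntimorphicInvolution.

Section TwoLetters.

Variable S : finType.
Hypothesis card_S : #|S| = 2.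

Lemma card2_either (x y z : S) : y != z -> x = y \/ x = z.
Proof.
move=> neq_yz; case: (eqVneq x y) => [->|neq_xy]; first by left.
case: (eqVneq x z) => [->|neq_xz]; first by right.
have uniq_xyz : uniq [:: x; y; z] by rewrite /= !inE negb_or neq_xy neq_xz neq_yz.
by have := max_card (mem [:: x; y; z]); rewrite (card_uniqP uniq_xyz) card_S.
Qed.

Lemma card2_involution (f : S -> S) :
  involutive f -> f =1 id \/ forall x, f x != x.
Proof.
move=> fK; case: (pickP (fun x => f x == x)) => [a /eqP fa | nofix]; last first.
  by right=> x; rewrite nofix.
left=> y; case: (eqVneq y a) => [-> // | neq_ya].
case: (card2_either (f y) neq_ya) => // fya.
by case/eqP: neq_ya; rewrite -(fK y) fya fa.
Qed.

End TwoLetters.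

Lemma factorD (T : Type) (w : nat -> T) i m n :
  factor w i (m + n) = factor w i m ++ factor w (i + m) n.
Proof.
rewrite /factor /mkseq iotaD map_cat; congr (_ ++ _).
rewrite add0n -[m in iota m n]addn0 iotaDl -map_comp.
by apply: eq_map => k /=; rewrite addnA.
Qed.

Lemma eq_factor (T : Type) (w w' : nat -> T) i n :
  (forall k, k < i + n -> w k = w' k) -> factor w i n = factor w' i n.
Proof.
move=> eq_ww'; apply/eq_in_map => k; rewrite mem_iota => /andP[_ k_lt].
by apply: eq_ww'; lia.
Qed.

Definition cube_blocks (T : Type) (w : nat -> T) i l :=
  [:: factor w i l; factor w (i + l) l; factor w (i + l + l) l].

Lemma pseudo_cube_blocks (T : eqType) (theta : seq T -> seq T) w i l :
    0 < l ->
    (forall a b, a \in cube_blocks w i l -> b \in cube_blocks w i l ->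
       a = b \/ a = theta b) ->
  pseudo_cube theta (factor w i (l + (l + l))).
Proof.
move=> l_gt0 related; split; first by case: l l_gt0 {related}.
by exists (factor w i l), (factor w (i + l) l), (factor w (i + l + l) l); rewrite !factorD.
Qed.

Lemma pseudo_cube_letters (T : eqType) (theta : seq T -> seq T) w i :
    (forall x y : T, [:: x] = [:: y] \/ [:: x] = theta [:: y]) ->
  pseudo_cube theta (factor w i 3).
Proof.
move=> related; apply: (@pseudo_cube_blocks _ theta w i 1) => // a b.
by rewrite !inE => /or3P[] /eqP-> /or3P[] /eqP->; apply: related.
Qed.

Lemma pseudo_cube_ext (T : eqType) (theta theta' : seq T -> seq T) x :
  theta =1 theta' -> pseudo_cube theta x -> pseudo_cube theta' x.
Proof.
move=> eq_theta [x_neq0 [u1 [u2 [u3 [x_eq related]]]]]; split=> //.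
by exists u1, u2, u3; split=> // a b au bu; rewrite -eq_theta; apply: related.
Qed.

Definition mirror_cube_at (b : nat -> bool) i l :=
  (0 < l) &&
  all (fun u => all (fun v => (u == v) || (u == rev v)) (cube_blocks b i l))
      (cube_blocks b i l).

Definition has_mirror_cube_below n (b : nat -> bool) :=
  has (fun i => has (fun l => (i + (l + (l + l)) <= n) && mirror_cube_at b i l)
                    (iota 1 n))
      (iota 0 n).

Fixpoint bitseqs n : seq (seq bool) :=
  if n is n'.+1 then [seq c :: s | c <- [:: true; false], s <- bitseqs n']
  else [:: [::]].

Lemma mem_bitseqs p : p \in bitseqs (size p).
Proof.
elim: p => [|c p IHp] //.
by apply: (allpairs_f (fun c s => c :: s)) => //; case: c.
Qed.

Lemma bitseqs10_have_mirror_cubes :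
  all (fun p => has_mirror_cube_below 10 (nth false p)) (bitseqs 10).
Proof. by vm_compute. Qed.

Lemma eq_mirror_cube_at (b b' : nat -> bool) i l :
    (forall k, k < i + (l + (l + l)) -> b k = b' k) ->
  mirror_cube_at b i l = mirror_cube_at b' i l.
Proof.
move=> eq_bb'; rewrite /mirror_cube_at.
suff -> : cube_blocks b i l = cube_blocks b' i l by [].
by congr [:: _; _; _]; apply: eq_factor => k k_lt; apply: eq_bb'; lia.
Qed.

Lemma exists_mirror_cube (b : nat -> bool) : exists i l, mirror_cube_at b i l.
Proof.
pose p := factor b 0 10.
have := mem_bitseqs p; rewrite size_mkseq => /(allP bitseqs10_have_mirror_cubes).
case/hasP=> i _ /hasP[l _ /andP[bound cube]].
exists i, l; rewrite -(eq_mirror_cube_at (b := nth false p)) // => k k_lt.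
by rewrite nth_mkseq //; lia.
Qed.

Lemma binary_word_has_mirror_pseudo_cube (S : finType) (card_S : #|S| = 2)
    (w : nat -> S) :
  exists i n, pseudo_cube (@rev S) (factor w i n).
Proof.
have /card_gt1P[y0 [y1 [_ _ neq_y01]]] : 1 < #|S| by rewrite card_S.
pose g (c : bool) := if c then y0 else y1.
pose b j := w j == y0.
have gb j : g (b j) = w j.
  rewrite /g /b; case: eqP => [// | /eqP neq_wy0].
  case: (card2_either card_S (w j) neq_y01) => // eq_wy0.
  by rewrite eq_wy0 eqxx in neq_wy0.
have factor_gb i n : factor w i n = map g (factor b i n).
  by rewrite /factor /mkseq -map_comp; apply: eq_map => k; rewrite /= gb.
have [i [l /andP[l_gt0 /allP related]]] := exists_mirror_cube b.
exists i, (l + (l + l)); apply: pseudo_cube_blocks => // u v.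
have -> : cube_blocks w i l = map (map g) (cube_blocks b i l).
  by rewrite /cube_blocks /= !factor_gb.
move=> /mapP[u' u'_in ->] /mapP[v' v'_in ->].
have /allP/(_ v' v'_in) := related u' u'_in.
by case/orP=> /eqP->; [left | right; rewrite map_rev].
Qed.

Theorem mainTheorem10 (S : finType) (hS : #|S| = 2)
    (theta : seq S -> seq S) (htheta : antimorphic_involution theta) :
  ~ exists w : nat -> S, pseudo_cube_free_inf theta w.
Proof.
case=> w cube_free.
have [f fK thetaE] := antimorphic_involutionE htheta.
case: (card2_involution hS fK) => [f_id | f_swap].
- have [i [n cube]] := binary_word_has_mirror_pseudo_cube hS w.
  apply: (cube_free i n); apply: pseudo_cube_ext cube => s.
  by rewrite thetaE (eq_map f_id) map_id.
- apply: (cube_free 0 3); apply: pseudo_cube_letters => x y.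
  rewrite thetaE /=; have := f_swap y; rewrite eq_sym => neq_yfy.
  by case: (card2_either hS x neq_yfy) => ->; [left | right].
Qed.
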